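(* Let $m,n\ge 2$ and let $\mathcal{A}$ be an $m$th order $n$-dimensional Hankel tensor with entries $a_{i_1\cdots i_m}=v_{i_1+\cdots+i_m-m}$ for a real vector $v=(v_0,\dots,v_{(n-1)m})^\top$. Let $\mathcal{P}$ be its associated plane tensor. If $\mathcal{A}$ is copositive, then $\mathcal{P}$ is copositive. If $m$ is even and $\mathcal{A}$ is positive semi-definite, then $\mathcal{P}$ is positive semi-definite.
   Context: For a real $l$th order $d$-dimensional tensor $\mathcal{B}=(b_{i_1\cdots i_l})$ and $x\in\mathbb{R}^d$, $\mathcal{B}x^l=\sum_{i_1,\dots,i_l=1}^d b_{i_1\cdots i_l}x_{i_1}\cdots x_{i_l}$. $\mathcal{B}$ is copositive if $\mathcal{B}x^l\ge0$ for all $x\in\mathbb{R}^d$ with $x\ge 0$; for even $l$, $\mathcal{B}$ is positive semi-definite if $\mathcal{B}x^l\ge 0$ for all $x\in\mathbb{R}^d$. For a nonnegative integer $k$, $s(k,m,n)$ denotes the number of ordered tuples $(i_1,\dots,i_m)$ with $i_j\in\{1,\dots,n\}$ and $i_1+\cdots+i_m-m=k$. The associated plane tensor of $\mathcal{A}$ is the symmetric tensor $\mathcal{P}=(p_{i_1\cdots i_{(n-1)m}})$ of order $(n-1)m$ and dimension $2$ defined by $p_{i_1\cdots i_{(n-1)m}}=\dfrac{s(k,m,n)\,v_k}{\binom{(n-1)m}{k}}$, where $k=i_1+\cdots+i_{(n-1)m}-(n-1)m$ and $i_j\in\{1,2\}$. *)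

From HB Require Import structures.
From mathcomp Require Import all_boot all_order all_algebra.
Set Implicit Arguments. Unset Strict Implicit. Unset Printing Implicit Defensive.
Import Order.TTheory GRing.Theory Num.Theory.
Local Open Scope ring_scope.

(* A real l-th order d-dimensional tensor: entries indexed by tuples
   (i_1,...,i_l), represented as functions 'I_l -> 'I_d (0-based indices). *)
Definition tensor (R : Type) (l d : nat) := {ffun 'I_l -> 'I_d} -> R.

Definition tform (R : realFieldType) (l d : nat) (B : tensor R l d)
  (x : 'I_d -> R) : R :=
  \sum_(f : {ffun 'I_l -> 'I_d}) B f * \prod_(j < l) x (f j).

Definition copositive (R : realFieldType) (l d : nat) (B : tensor R l d) :=
  forall x : 'I_d -> R, (forall i, 0 <= x i) -> 0 <= tform B x.

Definition psd (R : realFieldType) (l d : nat) (B : tensor R l d) :=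
  forall x : 'I_d -> R, 0 <= tform B x.

(* sum of 0-based indices = i_1 + ... + i_l - l for 1-based indices *)
Definition idxsum (l d : nat) (f : {ffun 'I_l -> 'I_d}) : nat :=
  (\sum_(j < l) (f j : nat))%N.

Definition hankel (R : realFieldType) (m n : nat) (v : nat -> R) : tensor R m n :=
  fun f => v (idxsum f).

Definition s_count (k m n : nat) : nat :=
  #|[set f : {ffun 'I_m -> 'I_n} | idxsum f == k]|.

Definition plane_tensor (R : realFieldType) (m n : nat) (v : nat -> R)
  : tensor R ((n - 1) * m) 2 :=
  fun f => let k := idxsum f in
    (s_count k m n)%:R * v k / ('C((n - 1) * m, k))%:R.
Arguments hankel {R} m n v.
Arguments plane_tensor {R} m n v.

From HB Require Import structures.
From mathcomp Require Import all_boot all_order all_algebra.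
From mathcomp Require Import zify ring.
Import Order.TTheory GRing.Theory Num.Theory.
Set Implicit Arguments. Unset Strict Implicit.
Local Open Scope ring_scope.

(* Both tensors have entries depending only on the index sum k, so each form
   collapses to a binary form in (y0, y1) once x_i := y0^(n-1-i) y1^i.  Grouping
   the terms by k, the Hankel form has coefficient s(k,m,n) v_k in front of
   y0^((n-1)m-k) y1^k, and so does the plane form, because s(k,(n-1)m,2) equals
   the binomial coefficient that the plane tensor divides by.  Hence
   P y^((n-1)m) = A x^m, and x is nonnegative when y is. *)

Definition monomial_vec (R : pzRingType) (d : nat) (y0 y1 : R) (i : 'I_d) : R :=
  y0 ^+ (d - 1 - i) * y1 ^+ i.

Lemma sum_by_fiber (R : pzRingType) (T : finType) (h : T -> nat) (N : nat)
    (G : nat -> R) :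
  (forall t, h t < N)%N ->
  \sum_(t : T) G (h t) = \sum_(k < N) #|[set t | h t == k]|%:R * G k.
Proof.
move=> hN.
transitivity (\sum_(t : T) \sum_(k < N) (h t == k)%:R * G k).
  apply: eq_bigr => t _.
  rewrite (bigD1 (Ordinal (hN t))) //= eqxx mul1r big1 ?addr0 // => k neq_k.
  by rewrite (_ : (h t == k) = false) ?mul0r //; apply: contraNF neq_k => /eqP hk;
    apply/eqP/val_inj.
rewrite exchange_big /=; apply: eq_bigr => k _.
rewrite -mulr_suml; congr (_ * _).
rewrite -sum1dep_card natr_sum [RHS]big_mkcond.
by apply: eq_bigr => t _; case: eqP.
Qed.

Lemma idxsum_compl l d (f : {ffun 'I_l -> 'I_d}) :
  ((\sum_(j < l) (d - 1 - f j)) + idxsum f = l * (d - 1))%N.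
Proof.
rewrite /idxsum -big_split /= (eq_bigr (fun _ => d - 1)%N).
  by rewrite sum_nat_const card_ord.
by move=> j _; have := ltn_ord (f j); lia.
Qed.

Lemma prod_monomial_vec (R : comPzRingType) l d (f : {ffun 'I_l -> 'I_d})
    (y0 y1 : R) :
  \prod_(j < l) monomial_vec y0 y1 (f j) =
  y0 ^+ (l * (d - 1) - idxsum f) * y1 ^+ idxsum f.
Proof.
have -> : (l * (d - 1) - idxsum f = \sum_(j < l) (d - 1 - f j))%N.
  by have := idxsum_compl f; lia.
by rewrite big_split /= !prodrXr.
Qed.

Lemma tform_idxsum (R : realFieldType) l d (c : nat -> R) (y0 y1 : R) :
  tform (fun f : {ffun 'I_l -> 'I_d} => c (idxsum f)) (monomial_vec y0 y1) =
  \sum_(k < (l * (d - 1)).+1)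
    (s_count k l d)%:R * (c k * (y0 ^+ (l * (d - 1) - k) * y1 ^+ k)).
Proof.
pose G k := c k * (y0 ^+ (l * (d - 1) - k) * y1 ^+ k).
rewrite /tform (eq_bigr (fun f => G (idxsum f))); last first.
  by move=> f _; rewrite prod_monomial_vec.
rewrite (sum_by_fiber (h := @idxsum l d) (N := (l * (d - 1)).+1) G) // => f.
by rewrite ltnS; have := idxsum_compl f; lia.
Qed.

Definition indicator_ffun L (A : {set 'I_L}) : {ffun 'I_L -> 'I_2} :=
  [ffun j => if j \in A then ord_max else ord0].

Lemma idxsum_indicator_ffun L (A : {set 'I_L}) :
  idxsum (indicator_ffun A) = #|A|.
Proof.
rewrite /idxsum -sum1_card [RHS]big_mkcond /=; apply: eq_bigr => j _.
by rewrite ffunE; case: (j \in A).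
Qed.

Lemma s_count_two k L : s_count k L 2 = 'C(L, k).
Proof.
rewrite /s_count -sum1dep_card (reindex (@indicator_ffun L)) /=.
  under eq_bigl => A do rewrite idxsum_indicator_ffun.
  by rewrite sum1dep_card card_draws card_ord.
apply: onW_bij; exists (fun f : {ffun 'I_L -> 'I_2} => [set j | f j != ord0]).
  by move=> A; apply/setP => j; rewrite inE ffunE; case: (j \in A).
move=> f; apply/ffunP => j; rewrite ffunE inE.
by case: (f j) => [[|[|i]] lti]; apply: val_inj.
Qed.

Lemma monomial_vec_two (R : pzRingType) (y : 'I_2 -> R) :
  y =1 monomial_vec (y ord0) (y ord_max).
Proof.
by move=> [[|[|i]] lti] //=; rewrite /monomial_vec /= ?expr0 ?expr1 ?mulr1 ?mul1r;
  congr y; apply: val_inj.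
Qed.

Lemma tform_plane_tensor (R : realFieldType) (m n : nat) (v : nat -> R)
    (y : 'I_2 -> R) :
  tform (plane_tensor m n v) y =
  tform (hankel m n v) (monomial_vec (y ord0) (y ord_max)).
Proof.
have -> : tform (plane_tensor m n v) y =
          tform (plane_tensor m n v) (monomial_vec (y ord0) (y ord_max)).
  by apply: eq_bigr => f _; congr (_ * _); apply: eq_bigr => j _;
    rewrite -monomial_vec_two.
rewrite (@tform_idxsum R ((n - 1) * m) 2
  (fun k => (s_count k m n)%:R * v k / ('C((n - 1) * m, k))%:R)).
rewrite (@tform_idxsum R m n v).
have -> : ((n - 1) * m * (2 - 1) = m * (n - 1))%N by lia.
apply: eq_bigr => k _.
have binom_neq0 : ('C((n - 1) * m, k))%:R != 0 :> R.
  by rewrite pnatr_eq0 -lt0n bin_gt0; have := ltn_ord k; lia.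
by rewrite s_count_two; field.
Qed.

Theorem theorem1 (R : realFieldType) (m n : nat) (v : nat -> R) :
  (2 <= m)%N -> (2 <= n)%N ->
  (copositive (hankel m n v) -> copositive (plane_tensor m n v)) /\
  (~~ odd m -> psd (hankel m n v) -> psd (plane_tensor m n v)).
Proof.
move=> _ _; split.
  move=> copA y y_ge0; rewrite tform_plane_tensor; apply: copA => i.
  by rewrite mulr_ge0 ?exprn_ge0.
by move=> _ psdA y; rewrite tform_plane_tensor.
Qed.
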